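(* Suppose Assumptions A1, A2 (SDSD) and A3 hold for a given steady state $(x^s,u^s)$ and $\gamma\in(0,1)$. Then $(x^s,u^s)$ is a minimizer of the optimal steady-state problem $$\min_{x,u}\ \tilde L^\gamma(x,u)\quad\text{s.t.}\quad x=f(x,u),$$ where $\tilde L^\gamma(x,u):=L(x,u)+(\gamma-1)V_\star^\gamma(f(x,u))$.
   Context: Setting: discrete-time system $x_+=f(x,u)$ with $x\in\mathbb{R}^{n_x}$, $u\in\mathbb{R}^{n_u}$, stage cost $L(x,u)$, constraint set $\mathbb{Z}:=\{(x,u): h(x,u)\le 0\}$, with the convention $L(x,u)=\infty$ for $(x,u)\notin\mathbb{Z}$, and discount factor $\gamma\in(0,1)$. For a policy $\pi$ the closed-loop trajectory is $x_{k+1}^\pi=f(x_k^\pi,\pi(x_k^\pi))$, $x_0^\pi=x_0$. $\mathbb{X}_0:=\{x_0:\exists\pi \text{ with } h(x_k^\pi,\pi(x_k^\pi))\le0\ \forall k\ge0\}$ and $\Pi:=\{\pi: h(x_k^\pi,\pi(x_k^\pi))\le 0\ \forall x_0\in\mathbb{X}_0,\forall k\ge 0\}$. The optimal value function is $V_\star^\gamma(x_0):=\min_{\pi\in\Pi}\sum_{k=0}^\infty\gamma^kL(x_k^\pi,\pi(x_k^\pi))$ and $\pi_\star^\gamma$ denotes an optimal policy. $(x^s,u^s)$ is a steady state, $x^s=f(x^s,u^s)$, normalized so that $L(x^s,u^s)=0$. Assumption A1: $\mathbb{Z}$ and $\mathbb{X}_0$ are compact and $|L(x,u)|<\infty$ for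 all $(x,u)\in\mathbb{Z}$. Assumption A2 (Strong Discounted Strict Dissipativity, SDSD): there exist a function $\lambda$, continuous at $x^s$, bounded on bounded sets, with $\lambda(x^s)=0$, and $\rho\in\mathcal{K}$ such that for all $(x,u)\in\mathbb{Z}$: (i) $L(x,u)+\lambda(x)-\gamma\lambda(f(x,u))\ge\rho(\|x-x^s\|)$; (ii) $L(x,u)+\lambda(x)-\lambda(f(x,u))+(\gamma-1)V_\star^\gamma(f(x,u))\ge\rho(\|x-x^s\|)$. Assumption A3: $V_\star^\gamma$ is continuous at $x^s$ and bounded on $\mathbb{X}_0$. $\mathcal{K}$ denotes continuous, strictly increasing functions $\mathbb{R}_{\ge0}\to\mathbb{R}_{\ge0}$ vanishing at $0$. *)

From HB Require Import structures.
From mathcomp Require Import all_boot all_order all_algebra.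
From mathcomp Require Import all_classical all_reals all_analysis.
Set Implicit Arguments. Unset Strict Implicit. Unset Printing Implicit Defensive.
Import Order.TTheory GRing.Theory Num.Theory.
Import numFieldNormedType.Exports.
Local Open Scope classical_set_scope.
Local Open Scope ring_scope.

Section Defs.
Variables (R : realType) (nx nu nh : nat).
Notation X := 'rV[R]_nx.
Notation U := 'rV[R]_nu.

Definition Zset (h : X -> U -> 'rV[R]_nh) : set (X * U) :=
  [set z | forall i, h z.1 z.2 0 i <= 0].

Fixpoint traj (f : X -> U -> X) (pi : X -> U) (x0 : X) (k : nat) : X :=
  match k with
  | O => x0
  | S k' => let x := traj f pi x0 k' in f x (pi x)
  end.

Definition X0set (f : X -> U -> X) (h : X -> U -> 'rV[R]_nh) : set X :=
  [set x0 | exists pi : X -> U, forall k,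
     Zset h (traj f pi x0 k, pi (traj f pi x0 k))].

Definition Pi (f : X -> U -> X) (h : X -> U -> 'rV[R]_nh) : set (X -> U) :=
  [set pi | forall x0, X0set f h x0 -> forall k,
     Zset h (traj f pi x0 k, pi (traj f pi x0 k))].

Definition Jcost (f : X -> U -> X) (L : X -> U -> \bar R) (gamma : R)
    (pi : X -> U) (x0 : X) : \bar R :=
  limn (fun n => (\sum_(0 <= k < n)
        ((gamma ^+ k)%:E * L (traj f pi x0 k) (pi (traj f pi x0 k))))%E).

Definition Vstar (f : X -> U -> X) (h : X -> U -> 'rV[R]_nh)
    (L : X -> U -> \bar R) (gamma : R) (x0 : X) : \bar R :=
  ereal_inf [set Jcost f L gamma pi x0 | pi in Pi f h].

Definition Ltilde (f : X -> U -> X) (h : X -> U -> 'rV[R]_nh)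
    (L : X -> U -> \bar R) (gamma : R) (x : X) (u : U) : \bar R :=
  (L x u + (gamma - 1)%:E * Vstar f h L gamma (f x u))%E.
End Defs.

Definition classK (R : realType) (rho : R -> R) : Prop :=
  [/\ rho 0 = 0,
      (forall r, 0 <= r -> 0 <= rho r),
      (forall r s, 0 <= r -> r < s -> rho r < rho s) &
      {within `[0, +oo[%classic, continuous rho}].

From HB Require Import structures.
From mathcomp Require Import all_boot all_order all_algebra.
From mathcomp Require Import all_classical all_reals all_analysis.
From mathcomp Require Import lra.
Set Implicit Arguments. Unset Strict Implicit. Unset Printing Implicit Defensive.
Import Order.TTheory GRing.Theory Num.Theory.
Import numFieldNormedType.Exports.
Local Open Scope classical_set_scope.
Local Open Scope ring_scope.

(* The rotated cost Ltilde x u = L x u + (gamma - 1) V(f x u) is compared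
   on the steady states (x, u) in Z only.
   - At any steady state x = f x u, part (ii) of strong discounted strict
     dissipativity has a vanishing storage difference lambda x - lambda (f x u),
     so it reads Ltilde x u >= rho |x - xs| >= 0.
   - At (xs, us) we have L xs us = 0, hence Ltilde xs us = (gamma - 1) V(xs),
     which is <= 0 as soon as V(xs) >= 0.
   - V(xs) >= 0 follows from part (i): along any admissible closed loop from
     xs, telescoping the discounted dissipation inequality bounds the n-th
     partial cost from below by gamma^n lambda(x_n) - lambda(xs) >= -gamma^n M,
     where M bounds lambda on the (compact) state projection of Z; letting
     n -> oo the discounted cost is >= 0.
   The file first proves the real-analysis facts (telescoping, limit of
   geometrically bounded sequences), then the system-level facts, and
   finally derives theorem4. *)

(* A sequence of extended reals bounded below by -(g^n M) with |g| < 1 has a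
   nonnegative limit (for a divergent sequence [limn] is the default 0). *)
Lemma limn_ge0_geometric_lower_bound (R : realType) (S : nat -> \bar R)
    (M g : R) :
  `|g| < 1 -> (forall n, ((- (g ^+ n * M))%:E <= S n)%E) -> (0 <= limn S)%E.
Proof.
move=> g1 hS.
have [cS|ncS] := pselect (cvgn S); last first.
  by rewrite /lim /lim_in xgetPN // => l Sl; apply: ncS; apply/cvg_ex; exists l.
have bound_cvg0 : (fun n => (- (g ^+ n * M))%:E) @ \oo --> (0 : R)%:E.
  apply/fine_cvgP; split; first exact: nearW.
  rewrite -oppr0 -(mul0r M); apply: cvgN; apply: cvgM.
  - exact: cvg_expr g1.
  - exact: cvg_cst.
rewrite -[X in (X <= _)%E](cvg_lim _ bound_cvg0) //.
exact: lee_lim (cvgP _ bound_cvg0) cS (nearW _ hS).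
Qed.

Lemma discounted_dissipation_telescope (R : realDomainType) (g : R)
    (l s : nat -> R) :
  0 <= g -> (forall k, g * s k.+1 <= l k + s k) ->
  forall n, g ^+ n * s n - s 0 <= \sum_(0 <= k < n) g ^+ k * l k.
Proof.
move=> g0 diss; elim=> [|n IHn]; first by rewrite big_geq // expr0 mul1r subrr.
rewrite big_nat_recr //= exprSr.
have step : 0 <= g ^+ n * (l n + s n - g * s n.+1).
  by apply: mulr_ge0; [exact: exprn_ge0 | rewrite subr_ge0 diss].
nra.
Qed.

Section SteadyState.
Variables (R : realType) (nx nu nh : nat).
Variables (f : 'rV[R]_nx -> 'rV[R]_nu -> 'rV[R]_nx)
  (h : 'rV[R]_nx -> 'rV[R]_nu -> 'rV[R]_nh)
  (L : 'rV[R]_nx -> 'rV[R]_nu -> \bar R) (gamma : R).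

Lemma traj_steady (x : 'rV[R]_nx) (u : 'rV[R]_nu) :
  x = f x u -> forall k, traj f (fun=> u) x k = x.
Proof. by move=> fxu; elim=> //= k ->; rewrite -fxu. Qed.

Lemma steady_in_X0 (x : 'rV[R]_nx) (u : 'rV[R]_nu) :
  x = f x u -> Zset h (x, u) -> X0set f h x.
Proof. by move=> fxu Zxu; exists (fun=> u) => k; rewrite traj_steady. Qed.

Lemma bounded_on_constraint_states (lambda : 'rV[R]_nx -> R) :
  compact (Zset h) ->
  (forall B, bounded_set B -> bounded_set (lambda @` B)) ->
  exists M : R, forall x u, Zset h (x, u) -> `|lambda x| <= M.
Proof.
move=> Zcpt lambda_bnd.
have : bounded_set (lambda @` (fst @` Zset h)).
  apply/lambda_bnd/compact_bounded/continuous_compact => //.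
  by apply: continuous_subspaceT => p; exact: cvg_fst.
move=> /pinfty_ex_gt0 [M _ hM]; exists M => x u Zxu.
by apply: hM; exists x => //; exists (x, u).
Qed.

Hypotheses (gamma_gt0 : 0 < gamma) (gamma_lt1 : gamma < 1).

Lemma Vstar_steady_ge0 (xs : 'rV[R]_nx) (us : 'rV[R]_nu)
    (lambda : 'rV[R]_nx -> R) (M : R) :
  xs = f xs us -> Zset h (xs, us) -> lambda xs = 0 ->
  (forall x u, Zset h (x, u) -> L x u \is a fin_num) ->
  (forall x u, Zset h (x, u) -> `|lambda x| <= M) ->
  (forall x u, Zset h (x, u) ->
     (0 <= L x u + (lambda x)%:E - (gamma * lambda (f x u))%:E)%E) ->
  (0 <= Vstar f h L gamma xs)%E.
Proof.
move=> fxs Zs lambda0 Lfin lambdaM diss.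
apply/ereal_infP => _ [pi Ppi <-].
have Zk := Ppi xs (steady_in_X0 fxs Zs).
set tr := traj f pi xs.
set l := fun k => fine (L (tr k) (pi (tr k))).
have Ltr k : L (tr k) (pi (tr k)) = (l k)%:E by rewrite /l fineK // Lfin.
apply: (@limn_ge0_geometric_lower_bound _ _ M gamma).
  by rewrite ger0_norm ?ltW.
move=> n; rewrite (eq_bigr (fun k => (gamma ^+ k * l k)%:E)); last first.
  by move=> k _; rewrite Ltr.
rewrite sumEFin lee_fin.
have diss_tr k : gamma * lambda (tr k.+1) <= l k + lambda (tr k).
  by have := diss _ _ (Zk k); rewrite -/tr Ltr -EFinD lee_fin subr_ge0.
apply: le_trans (discounted_dissipation_telescope (ltW gamma_gt0) diss_tr n).
rewrite /= lambda0 subr0 -mulrN; apply: ler_wpM2l; first exact/exprn_ge0/ltW.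
by have := lambdaM _ _ (Zk n); rewrite ler_norml => /andP[].
Qed.

(* Part (ii) of the dissipativity assumption at a steady state: the storage
   difference vanishes, so the rotated cost is nonnegative there. *)
Lemma Ltilde_steady_ge0 (xs x : 'rV[R]_nx) (u : 'rV[R]_nu)
    (lambda : 'rV[R]_nx -> R) (rho : R -> R) :
  (forall r, 0 <= r -> 0 <= rho r) ->
  (L x u + (lambda x - lambda (f x u))%:E
     + (gamma - 1)%:E * Vstar f h L gamma (f x u)
     >= (rho `|x - xs|)%:E)%E ->
  x = f x u -> (0 <= Ltilde f h L gamma x u)%E.
Proof.
move=> rho_ge0 diss fxu; rewrite /Ltilde.
move: diss; rewrite -fxu subrr adde0; apply: le_trans.
by rewrite lee_fin rho_ge0.
Qed.

Lemma Ltilde_steady_le0 (xs : 'rV[R]_nx) (us : 'rV[R]_nu) :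
  xs = f xs us -> L xs us = 0%E -> (0 <= Vstar f h L gamma xs)%E ->
  (Ltilde f h L gamma xs us <= 0)%E.
Proof.
move=> fxs L0 V0; rewrite /Ltilde -fxs L0 add0e.
by apply: mule_le0_ge0 => //; rewrite lee_fin subr_le0 ltW.
Qed.

End SteadyState.

Theorem theorem4 (R : realType) (nx nu nh : nat)
  (f : 'rV[R]_nx -> 'rV[R]_nu -> 'rV[R]_nx)
  (h : 'rV[R]_nx -> 'rV[R]_nu -> 'rV[R]_nh)
  (L : 'rV[R]_nx -> 'rV[R]_nu -> \bar R)
  (gamma : R) (xs : 'rV[R]_nx) (us : 'rV[R]_nu)
  (hgamma : 0 < gamma < 1)
  (* convention L = +oo outside Z *)
  (hLout : forall x u, ~ Zset h (x, u) -> L x u = +oo%E)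
  (* steady state, normalized *)
  (hss : xs = f xs us) (hL0 : L xs us = 0%E)
  (* A1 *)
  (A1Z : compact (Zset h)) (A1X0 : compact (X0set f h))
  (A1L : forall x u, Zset h (x, u) -> L x u \is a fin_num)
  (* A2 (SDSD) *)
  (A2 : exists (lambda : 'rV[R]_nx -> R) (rho : R -> R),
     {for xs, continuous lambda} /\
         (forall B, bounded_set B -> bounded_set (lambda @` B)) /\
         lambda xs = 0 /\
         classK rho /\
         (forall x u, Zset h (x, u) ->
            (L x u + (lambda x)%:E - (gamma * lambda (f x u))%:E
               >= (rho `|x - xs|)%:E)%E) /\
         (forall x u, Zset h (x, u) ->
            (L x u + (lambda x - lambda (f x u))%:E
               + (gamma - 1)%:E * Vstar f h L gamma (f x u)
               >= (rho `|x - xs|)%:E)%E))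
  (* A3 *)
  (A3c : {for xs, continuous (Vstar f h L gamma)})
  (A3b : exists M : R, forall x, X0set f h x ->
            (`|Vstar f h L gamma x| <= M%:E)%E) :
  forall x u, Zset h (x, u) -> x = f x u ->
    (Ltilde f h L gamma xs us <= Ltilde f h L gamma x u)%E.
Proof.
move=> x u Zxu fxu.
have [lambda [rho [_ [lambda_bnd [lambda0 [[_ rho_ge0 _ _] [diss1 diss2]]]]]]] := A2.
have [g0 g1] := andP hgamma.
have Zs : Zset h (xs, us) by apply: contrapT => /hLout; rewrite hL0.
have [M lambdaM] := bounded_on_constraint_states A1Z lambda_bnd.
have diss1_ge0 y v : Zset h (y, v) ->
    (0 <= L y v + (lambda y)%:E - (gamma * lambda (f y v))%:E)%E.
  by move=> Zyv; apply: le_trans (diss1 _ _ Zyv); rewrite lee_fin rho_ge0.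
have V0 := Vstar_steady_ge0 g0 g1 hss Zs lambda0 A1L lambdaM diss1_ge0.
apply: le_trans (Ltilde_steady_le0 g1 hss hL0 V0) _.
exact: Ltilde_steady_ge0 rho_ge0 (diss2 _ _ Zxu) fxu.
Qed.
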